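(* Let $L/K$ be a nontrivial finite extension inside $\bar K$, and let $G={\rm Gal}(\tilde L/K)$, $H={\rm Gal}(\tilde L/L)$. (1) The field $N=\tilde L^{N_G(H)}$ is the unique intermediate field $K\subseteq N\subseteq L$ such that $L/N$ is Galois of degree $[L:N]=r_K(L)$. Hence $[N:K]=s_K(L)$. (2) There is a unique strictly descending chain of subfields $L=N_0\supsetneq N_1\supsetneq\cdots\supsetneq N_k$ such that for all $i\ge1$, $N_{i-1}/N_i$ is Galois of degree $[N_{i-1}:N_i]=r_K(N_{i-1})$, the chain terminating at $N_k$ with $r_K(N_k)=1$. Hence $[N_i:K]=s_K(N_{i-1})$ for all $i\ge1$, and $s_K(N_{k-1})=s_K(N_k)$. This chain corresponds (via $N_i=\tilde L^{H_i}$) to the unique strictly ascending chain of subgroups $H=H_0\subsetneq H_1\subsetneq\cdots\subsetneq H_k$ of $G$ with $H_i=N_G(H_{i-1})$ (so each $H_{i-1}$ is a proper normal subgroup of $H_i$) and $N_G(H_k)=H_k$; moreover $r_K(N_i)=[H_{i+1}:H_i]$ and $s_K(N_i)=[G:H_{i+1}]$. (3) $L/K$ is obtained by weak cluster magnification from $N_k/K$ with magnification factor $r_K(L)$. (4) $N_k=K$ if and only if $N_{k-1}/K$ is Galois. (5) $r_K(L)=1$ iff $N_G(H)=H$ iff the chain in (2) is the singleton $L$. (6) $L/K$ is Galois iff $N_G(H)=G$ iff the chain in (2) is $L\supsetneq K$. (7) $N_G(H)$ is a proper normal subgroup of $G$ iff the chain in (2) is $L\supsetneq N\supsetneq K$.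
   Context: $K$ is a perfect field with a fixed algebraic closure $\bar K$; all extensions are finite and contained in $\bar K$. For a finite extension $L/K$, $\tilde L$ denotes its Galois closure in $\bar K$. Writing $L=K(\alpha)$ with $f$ the minimal polynomial of $\alpha$ over $K$, the cluster size $r_K(L)$ is the number of roots of $f$ lying in $L$ (independent of $\alpha$; it equals $|{\rm Aut}(L/K)|$), and $s_K(L)=[L:K]/r_K(L)$. For $K\subseteq L\subseteq M$, $M/K$ is said to be obtained by weak cluster magnification from $L/K$ if $r_K(L)\mid r_K(M)$; the magnification factor is $r_K(M)/r_K(L)$. $N_G(H)$ denotes the normalizer of $H$ in $G$. *)

From HB Require Import structures.
From mathcomp Require Import all_boot all_order all_algebra all_fingroup all_solvable all_field.
Set Implicit Arguments. Unset Strict Implicit. Unset Printing Implicit Defensive.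
Import GRing.Theory.
Local Open Scope ring_scope.

(* Ambient setting: E is a finite splitting-field extension; all fields of the
   paper (K, L, the Galois closure of L/K, intermediate fields) are subfields
   of E, and E/K is assumed Galois (this plays the role of \bar K). *)
Section ClusterDefs.
Variables (F : fieldType) (E : splittingFieldType F).
Implicit Types K L M : {subfield E}.

Definition minPoly_roots K (x : E) : seq E :=
  xchoose (splitting_field_normal K x).

(* r_K(L): number of roots of the minimal polynomial over K of a primitive
   element alpha of L = K(alpha) that lie in L. *)
Definition cluster_size K L : nat :=
  let alpha := separable_generator K L in
  size (undup [seq y <- minPoly_roots K alpha | y \in L]).

Definition cluster_s K L : nat := (\dim_K L %/ cluster_size K L)%N.

(* Galois closure of L/K inside E: compositum of the K-conjugates of L. *)
Definition galois_closure K L : {subfield E} :=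
  (<< \sum_(g in 'Gal({:E} / K)%g) (g @: L)%VS >>)%AS.

Definition fixed_subfield (V : {subfield E}) (A : {set gal_of V}) : {subfield E} :=
  fixedField_aspace A.

Definition weak_cluster_magnification K L M : bool :=
  [&& (K <= L)%VS, (L <= M)%VS & (cluster_size K L %| cluster_size K M)%N].

Definition magnification_factor K L M : nat :=
  (cluster_size K M %/ cluster_size K L)%N.

Definition cluster_chain K L (k : nat) (N : nat -> {subfield E}) : Prop :=
  [/\ N 0%N = L,
      forall i, (0 < i <= k)%N ->
        [/\ (K <= N i)%VS, (N i <= N i.-1)%VS, N i != N i.-1,
            galois (N i) (N i.-1)
          & \dim_(N i) (N i.-1) = cluster_size K (N i.-1)]
    & cluster_size K (N k) = 1%N].

End ClusterDefs.

Definition normalizer_chain (gT : finGroupType) (G H : {group gT}) (k : nat)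
    (Hs : nat -> {group gT}) : Prop :=
  [/\ Hs 0%N :=: H,
      forall i, (0 < i <= k)%N -> Hs i :=: 'N_G(Hs i.-1)%g /\ Hs i.-1 \proper Hs i
    & 'N_G(Hs k)%g :=: Hs k].

From HB Require Import structures.
From mathcomp Require Import all_boot all_order all_algebra all_fingroup all_solvable all_field.
Set Implicit Arguments. Unset Strict Implicit. Unset Printing Implicit Defensive.
Import GRing.Theory.
Local Open Scope ring_scope.

(* Work in any Galois extension T/K containing L, e.g. the Galois closure, with
   G = Gal(T/K) and H = Gal(T/L), so that L = T^H. Let a be a primitive element
   of L/K. A K-automorphism x with x(a) in L maps L = K(a) onto itself, hence
   normalizes H; conversely, for x in N_G(H) the root x(a) lies in L. So the
   roots of the minimal polynomial of a lying in L are the roots of its minimal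
   polynomial over T^N_G(H), and r_K(L) = [N_G(H) : H] = [L : T^N_G(H)].
   Through the Galois correspondence every assertion about the chain of fields
   becomes one about the tower H <= N_G(H) <= N_G(N_G(H)) <= ..., which grows
   strictly until it stabilizes. *)

Section GaloisCorrespondence.
Variables (F : fieldType) (E : splittingFieldType F) (T : {subfield E}).
Implicit Types X Y : {group gal_of T}.

Lemma fixedField_subvE X Y :
  (fixedField Y <= fixedField X)%VS = (X \subset Y).
Proof. by rewrite -galois_connection ?fixedField_bound // gal_fixedField. Qed.

Lemma fixedField_inj X Y : fixedField X = fixedField Y -> X :=: Y.
Proof. by move=> eqXY; rewrite -(gal_fixedField X) eqXY gal_fixedField. Qed.

Lemma dim_fixedField_index X Y : X \subset Y ->
  \dim_(fixedField Y) (fixedField X) = #|Y : X|%g.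
Proof.
move=> sXY; rewrite -{2}(gal_fixedField Y).
by rewrite dim_fixed_galois ?fixedField_galois ?gal_fixedField.
Qed.

Lemma galois_fixedFieldE X Y : X \subset Y ->
  galois (fixedField Y) (fixedField X) = (X <| Y)%g.
Proof.
move=> sXY; have galY := fixedField_galois Y.
apply/idP/idP => [/and3P[_ _ nYX] | nsXY].
  rewrite -{1}(gal_fixedField X) -(gal_fixedField Y).
  apply: normalField_normal nYX.
  by rewrite fixedField_subvE sXY fixedField_bound.
by apply: (normal_fixedField_galois galY); rewrite gal_fixedField.
Qed.

Lemma norm_fixedField_stable X (x : gal_of T) :
  (x @: fixedField X <= fixedField X)%VS -> x \in 'N(X)%g.
Proof.
move=> sxX; have eq_xX : (x @: fixedField X)%VS = fixedField X.
  apply/eqP; rewrite -(dimv_leqif_eq sxX) limg_dim_eq //.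
  by rewrite (eqP (AEnd_lker0 _)) capv0.
by apply/normP; rewrite -{1 2}(gal_fixedField X) gal_conjg eq_xX.
Qed.

End GaloisCorrespondence.

Section MinPolyRoots.
Variables (F : fieldType) (E : splittingFieldType F).
Implicit Types K M : {subfield E}.

Lemma minPoly_rootsE K (a : E) :
  minPoly K a = \prod_(y <- minPoly_roots K a) ('X - y%:P).
Proof. exact: (eqP (xchooseP (splitting_field_normal K a))). Qed.

Lemma cluster_sizeE K M (r : seq E) : uniq r ->
    (forall y, (y \in r)
       = (y \in M) && root (minPoly K (separable_generator K M)) y) ->
  cluster_size K M = size r.
Proof.
move=> Ur memr; apply/perm_size/uniq_perm; rewrite ?undup_uniq // => y.
by rewrite mem_undup mem_filter memr minPoly_rootsE root_prod_XsubC.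
Qed.

End MinPolyRoots.

Section ClusterSizeOfFixedFields.
Variables (F : fieldType) (E : splittingFieldType F) (K T : {subfield E}).
Hypothesis galKT : galois K T.
Local Notation G := 'Gal(T / K)%G.
Implicit Types X Y : {group gal_of T}.

Let sKT : (K <= T)%VS. Proof. by case/and3P: galKT. Qed.
Let fixedField_gal : fixedField G = K. Proof. exact/galois_fixedField. Qed.
Let sub_normalizer X : X \subset G -> X \subset 'N_G(X)%g.
Proof. by move=> sXG; rewrite subsetI sXG normG. Qed.

Lemma sub_fixedField X : X \subset G -> (K <= fixedField X)%VS.
Proof. by rewrite -galois_connection. Qed.

Lemma fixedField_eq_base X : fixedField X = K <-> X :=: G.
Proof.
by rewrite -{1}fixedField_gal; split=> [/fixedField_inj | ->].
Qed.

Lemma galois_base_fixedFieldE X : X \subset G ->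
  galois K (fixedField X) = (X <| G)%g.
Proof. by move=> sXG; rewrite -galois_fixedFieldE // fixedField_gal. Qed.

Lemma root_minPoly_fixedField_normalizer X a y :
    X \subset G -> <<K; a>>%VS = fixedField X ->
  (y \in fixedField X) && root (minPoly K a) y
    = root (minPoly (fixedField 'N_G(X)%g) a) y.
Proof.
move=> sXG DM; have Ma : a \in fixedField X by rewrite -DM memv_adjoin.
have Ta : a \in T := subvP (fixedField_bound X) a Ma.
have sXN := sub_normalizer sXG.
have /and3P[sNM _ nNM] : galois (fixedField 'N_G(X)%g) (fixedField X).
  by rewrite galois_fixedFieldE // normal_subnorm.
apply/andP/idP => [[My rootKy] | rootNy].
  have [_ _ nKT] := and3P galKT.
  have [x galKx Dy] := normalField_root_minPoly sKT nKT Ta rootKy; subst y.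
  apply: root_minPoly_gal (fixedField_bound _) _ Ta.
  rewrite gal_fixedField inE galKx /=; apply: norm_fixedField_stable.
  rewrite -{1}DM aimg_adjoin; apply/FadjoinP; split=> //.
  apply/subvP=> _ /memv_imgP[b Kb ->].
  by rewrite (fixed_gal sKT galKx Kb) (subvP (sub_fixedField sXG)).
split.
  have [x galx <-] := normalField_root_minPoly sNM nNM Ma rootNy.
  exact: memv_gal.
apply: root_dvdp rootNy; apply: minPolyS.
by rewrite sub_fixedField ?subsetIl.
Qed.

Lemma cluster_size_fixedField X : X \subset G ->
  cluster_size K (fixedField_aspace X) = #|'N_G(X)%g : X|%g.
Proof.
move=> sXG; set M := fixedField_aspace X; set a := separable_generator K M.
have sKM : (K <= M)%VS := sub_fixedField sXG.
have sKN : (K <= fixedField 'N_G(X)%g)%VS by rewrite sub_fixedField ?subsetIl.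
have sXN := sub_normalizer sXG.
have sepKM : separable K M.
  by apply: separableSr (fixedField_bound X) _; case/and3P: galKT.
have DM : <<K; a>>%VS = M := esym (eq_adjoin_separable_generator sepKM sKM).
have Ma : a \in M by rewrite -DM memv_adjoin.
have /and3P[sNM sepNM nNM] : galois (fixedField 'N_G(X)%g) M.
  by rewrite galois_fixedFieldE // normal_subnorm.
have DNa : <<fixedField 'N_G(X)%g; a>>%VS = M.
  apply/eqP; rewrite eqEsubv -{2}DM adjoinSl // andbT.
  by apply/FadjoinP; split.
have [r _ DpN] := normalFieldP nNM a Ma.
have Ur : uniq r.
  by rewrite -separable_prod_XsubC -DpN; apply: (separableP sepNM a Ma).
rewrite (@cluster_sizeE _ _ _ _ r) => [|//|y]; last first.
  by rewrite root_minPoly_fixedField_normalizer // DpN root_prod_XsubC.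
have := size_minPoly (fixedField 'N_G(X)%g) a.
rewrite DpN size_prod_XsubC => -[->].
by rewrite adjoin_degreeE DNa dim_fixedField_index.
Qed.

Lemma cluster_s_fixedField X : X \subset G ->
  cluster_s K (fixedField_aspace X) = #|G : 'N_G(X)%g|%g.
Proof.
move=> sXG; have sXN := sub_normalizer sXG.
rewrite /cluster_s cluster_size_fixedField // dim_fixed_galois //.
by rewrite -(Lagrange_index (subsetIl _ _) sXN) mulnK ?indexg_gt0.
Qed.

Lemma fixedField_normalizer_unique X (M : {subfield E}) : X \subset G ->
    (K <= M)%VS -> (M <= fixedField X)%VS -> galois M (fixedField X) ->
    \dim_M (fixedField X) = cluster_size K (fixedField_aspace X) ->
  (M : {vspace E}) = fixedField 'N_G(X)%g.
Proof.
move=> sXG sKM sMX galMX dimMX.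
have sMT : (M <= T)%VS := subv_trans sMX (fixedField_bound X).
pose Y := 'Gal(T / M)%G.
have DM : fixedField Y = M.
  by apply/galois_fixedField; apply: galoisS galKT; rewrite sKM sMT.
have sXY : X \subset Y by rewrite -fixedField_subvE DM.
have sYN : Y \subset 'N_G(X)%g.
  by rewrite subsetI galS // normal_norm // -galois_fixedFieldE // DM.
have sXN := sub_normalizer sXG.
suff <- : gval Y = 'N_G(X)%g by [].
apply/eqP; rewrite eqEcard sYN /= -(Lagrange sXY) -(Lagrange sXN).
by rewrite -(dim_fixedField_index sXY) DM dimMX cluster_size_fixedField.
Qed.

End ClusterSizeOfFixedFields.

Section NormalizerTower.
Variables (F : fieldType) (E : splittingFieldType F) (K T L : {subfield E}).
Hypotheses (galKT : galois K T) (sKL : (K <= L)%VS) (sLT : (L <= T)%VS).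
Local Notation G := 'Gal(T / K)%G.
Local Notation H := 'Gal(T / L)%G.

(* ntower, ftower and tower_height are the paper's H_i, N_i and k. *)
Definition ntower i : {group gal_of T} :=
  iter i (fun X : {group gal_of T} => 'N_G(X)%G) H.

Definition tower_stable i := ('N_G(ntower i) == ntower i)%g.

Lemma ntower_sub i : ntower i \subset G.
Proof. by case: i => [|i]; [apply: galS | apply: subsetIl]. Qed.

Lemma ntower_normal i : (ntower i <| ntower i.+1)%g.
Proof. by rewrite /= normal_subnorm ntower_sub. Qed.

Lemma ntowerS i : ntower i \subset ntower i.+1.
Proof. exact/normal_sub/ntower_normal. Qed.

Lemma ntower_properE i : (ntower i \proper ntower i.+1) = ~~ tower_stable i.
Proof. by rewrite properE ntowerS /tower_stable eqEsubset ntowerS andbT. Qed.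

Lemma ntower_succ_stable i : tower_stable i -> ntower i.+1 :=: ntower i.
Proof. by move/eqP. Qed.

Lemma tower_stableS i : tower_stable i -> tower_stable i.+1.
Proof. by move=> stable_i; rewrite /tower_stable ntower_succ_stable. Qed.

Lemma exists_tower_stable : exists i, tower_stable i.
Proof.
have [i /= stable_i | unstable] := pickP (fun i : 'I_#|G|.+1 => tower_stable i).
  by exists i.
have grow n : (n <= #|G|.+1)%N -> (n < #|ntower n|)%N.
  elim: n => [|n IHn] lt_n; first exact: cardG_gt0.
  apply: leq_ltn_trans (IHn (ltnW lt_n)) (proper_card _).
  by rewrite ntower_properE (unstable (Ordinal lt_n)).
have := leq_trans (grow _ (leqnn _)) (subset_leq_card (ntower_sub _)).
by move/ltnW; rewrite ltnn.
Qed.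

Definition tower_height := ex_minn exists_tower_stable.

Lemma tower_stableE i : tower_stable i = (tower_height <= i)%N.
Proof.
rewrite /tower_height; case: ex_minnP => m stable_m min_m.
apply/idP/idP => [/min_m // | le_mi].
rewrite -(subnKC le_mi); elim: (i - m)%N => [|d]; first by rewrite addn0.
by rewrite addnS; apply: tower_stableS.
Qed.

Lemma tower_heightP k : tower_stable k ->
  (forall i, (i < k)%N -> ~~ tower_stable i) -> k = tower_height.
Proof.
move=> stable_k unstable; apply/eqP; rewrite eqn_leq -tower_stableE stable_k.
by rewrite leqNgt andbT; apply/negP => /unstable; rewrite tower_stableE leqnn.
Qed.

Lemma stable_ntower_base i : ntower i :=: G -> tower_stable i.
Proof. by move=> eqG; rewrite /tower_stable eqG; apply/eqP/setIidPl/normG. Qed.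

Lemma tower_height_succ j :
  ntower j.+1 :=: G -> ~~ tower_stable j -> tower_height = j.+1.
Proof.
move=> eqG unstable_j; apply/eqP; rewrite eqn_leq -tower_stableE.
by rewrite stable_ntower_base // ltnNge -tower_stableE.
Qed.

Definition ftower i : {subfield E} := fixed_subfield (ntower i).

Lemma ftower0 : ftower 0 = L.
Proof.
by apply/val_inj/galois_fixedField; apply: galoisS galKT; rewrite sKL sLT.
Qed.

Lemma sub_ftower i : (K <= ftower i)%VS.
Proof. exact/sub_fixedField/ntower_sub. Qed.

Lemma ftowerS i : (ftower i.+1 <= ftower i)%VS.
Proof. by rewrite fixedField_subvE ntowerS. Qed.

Lemma ftower_subL i : (ftower i <= L)%VS.
Proof.
elim: i => [|i IHi]; first by rewrite ftower0.
exact: subv_trans (ftowerS i) IHi.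
Qed.

Lemma galois_ftower_step i : galois (ftower i.+1) (ftower i).
Proof. by rewrite galois_fixedFieldE ?ntowerS ?ntower_normal. Qed.

Lemma cluster_size_ftower i :
  cluster_size K (ftower i) = #|ntower i.+1 : ntower i|%g.
Proof. exact/cluster_size_fixedField/ntower_sub. Qed.

Lemma cluster_s_ftower i : cluster_s K (ftower i) = #|G : ntower i.+1|%g.
Proof. exact/cluster_s_fixedField/ntower_sub. Qed.

Lemma dim_ftower_step i :
  \dim_(ftower i.+1) (ftower i) = cluster_size K (ftower i).
Proof. by rewrite dim_fixedField_index ?ntowerS // cluster_size_ftower. Qed.

Lemma dim_ftower_succ i : \dim_K (ftower i.+1) = cluster_s K (ftower i).
Proof. by rewrite dim_fixed_galois ?ntower_sub // cluster_s_ftower. Qed.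

Lemma cluster_size_ftower_eq1 i :
  (cluster_size K (ftower i) == 1%N) = tower_stable i.
Proof.
by rewrite cluster_size_ftower indexg_eq1 /tower_stable eqEsubset ntowerS andbT.
Qed.

Lemma ftower_eq_succ i : (ftower i.+1 == ftower i) = tower_stable i.
Proof.
apply/eqP/eqP => [/(congr1 val)/fixedField_inj // | stable_i].
by apply/val_inj; rewrite /= stable_i.
Qed.

Lemma ftower_step_unique i (M : {subfield E}) :
    (K <= M)%VS -> (M <= ftower i)%VS -> galois M (ftower i) ->
    \dim_M (ftower i) = cluster_size K (ftower i) ->
  M = ftower i.+1.
Proof.
by move=> *; apply/val_inj/(fixedField_normalizer_unique galKT (ntower_sub i)).
Qed.

Lemma ftower_eq_base i : ftower i = K <-> ntower i :=: G.
Proof.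
split=> [/(congr1 val)/(fixedField_eq_base galKT) // | eqG].
exact/val_inj/(fixedField_eq_base galKT).
Qed.

Lemma galois_ftower i : galois K (ftower i) <-> ntower i.+1 :=: G.
Proof.
rewrite galois_base_fixedFieldE ?ntower_sub // /normal ntower_sub.
by split=> /setIidPl.
Qed.

Lemma ntower_chain : normalizer_chain G H tower_height ntower.
Proof.
split=> //; last by apply/eqP; rewrite -/(tower_stable _) tower_stableE.
case=> // i /andP[_ lt_ik]; split=> //.
by rewrite ntower_properE tower_stableE -ltnNge.
Qed.

Lemma normalizer_chain_unique k (Hs : nat -> {group gal_of T}) :
    normalizer_chain G H k Hs ->
  k = tower_height /\ (forall i, (i <= tower_height)%N -> Hs i :=: ntower i).
Proof.
case=> Hs0 Hs_step Hs_last.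
have eqHs i : (i <= k)%N -> Hs i :=: ntower i.
  elim: i => [// | i IHi] le_ik.
  have [-> _] := Hs_step i.+1 le_ik; rewrite -[i.+1.-1]/i.
  by rewrite -[ntower i.+1]/('N_G(ntower i))%G (IHi (ltnW le_ik)).
have k_eq : k = tower_height.
  apply: tower_heightP => [|i lt_ik].
    by rewrite /tower_stable -(eqHs k) //; apply/eqP.
  have [_] := Hs_step i.+1 lt_ik; rewrite -[i.+1.-1]/i.
  by rewrite (eqHs i (ltnW lt_ik)) (eqHs i.+1 lt_ik) ntower_properE.
by split=> // i; rewrite -k_eq; apply: eqHs.
Qed.

Lemma ftower_chain : cluster_chain K L tower_height ftower.
Proof.
split; first exact: ftower0.
  case=> // i /andP[_ lt_ik]; split.
  - exact: sub_ftower.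
  - exact: ftowerS.
  - by rewrite ftower_eq_succ tower_stableE -ltnNge.
  - exact: galois_ftower_step.
  - exact: dim_ftower_step.
by apply/eqP; rewrite cluster_size_ftower_eq1 tower_stableE.
Qed.

Lemma cluster_chain_unique k (Nc : nat -> {subfield E}) :
    cluster_chain K L k Nc ->
  k = tower_height /\ (forall i, (i <= tower_height)%N -> Nc i = ftower i).
Proof.
case=> Nc0 Nc_step Nc_last.
have eqNc i : (i <= k)%N -> Nc i = ftower i.
  elim: i => [_ | i IHi lt_ik]; first by rewrite Nc0 ftower0.
  have [sKN sNN _ galNN dimNN] := Nc_step i.+1 lt_ik.
  rewrite -[i.+1.-1]/i (IHi (ltnW lt_ik)) in sNN galNN dimNN.
  exact: ftower_step_unique.
have k_eq : k = tower_height.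
  apply: tower_heightP => [|i lt_ik].
    by rewrite -cluster_size_ftower_eq1 -(eqNc k) // Nc_last.
  have [_ _ neqN _ _] := Nc_step i.+1 lt_ik.
  move: neqN; rewrite -[i.+1.-1]/i (eqNc i (ltnW lt_ik)) (eqNc i.+1 lt_ik).
  by rewrite ftower_eq_succ.
by split=> // i; rewrite -k_eq; apply: eqNc.
Qed.

Lemma ftower1_characterization :
  [/\ (K <= ftower 1)%VS, (ftower 1 <= L)%VS, galois (ftower 1) L,
      \dim_(ftower 1) L = cluster_size K L
    & forall M : {subfield E}, (K <= M)%VS -> (M <= L)%VS -> galois M L ->
        \dim_M L = cluster_size K L -> M = ftower 1].
Proof.
move: (ftowerS 0) (galois_ftower_step 0).
move: (dim_ftower_step 0) (@ftower_step_unique 0).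
by rewrite ftower0; split=> //; apply: sub_ftower.
Qed.

Lemma dim_ftower1 : \dim_K (ftower 1) = cluster_s K L.
Proof. by rewrite dim_ftower_succ ftower0. Qed.

Lemma ftower_cluster_chain_spec :
  [/\ cluster_chain K L tower_height ftower,
      forall k Nc, cluster_chain K L k Nc ->
        k = tower_height
        /\ (forall i, (i <= tower_height)%N -> Nc i = ftower i),
      forall i, (0 < i <= tower_height)%N ->
        \dim_K (ftower i) = cluster_s K (ftower i.-1)
    & (0 < tower_height)%N ->
        cluster_s K (ftower tower_height.-1)
        = cluster_s K (ftower tower_height)].
Proof.
split; [exact: ftower_chain | exact: cluster_chain_unique | |].
  by case=> // i _; rewrite dim_ftower_succ.
move=> height_gt0; rewrite !cluster_s_ftower prednK //.
by rewrite ntower_succ_stable // tower_stableE.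
Qed.

Lemma ntower_normalizer_chain_spec :
  [/\ normalizer_chain G H tower_height ntower,
      forall k Hs, normalizer_chain G H k Hs ->
        k = tower_height
        /\ (forall i, (i <= tower_height)%N -> Hs i :=: ntower i),
      forall i, (0 < i <= tower_height)%N ->
        (ntower i.-1 <| ntower i)%g /\ ntower i.-1 \proper ntower i,
      forall i, (i <= tower_height)%N ->
        ftower i = fixedField (ntower i) :> {vspace E}
    & forall i, (i < tower_height)%N ->
        cluster_size K (ftower i) = #|ntower i.+1 : ntower i|%g
        /\ cluster_s K (ftower i) = #|G : ntower i.+1|%g].
Proof.
split=> //; [exact: ntower_chain | exact: normalizer_chain_unique | |].
  case=> // i /andP[_ lt_ik]; split; first exact: ntower_normal.
  by rewrite ntower_properE tower_stableE -ltnNge.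
by move=> i _; rewrite cluster_size_ftower cluster_s_ftower.
Qed.

Lemma ftower_height_magnification :
  weak_cluster_magnification K (ftower tower_height) L
  /\ magnification_factor K (ftower tower_height) L = cluster_size K L.
Proof.
have /eqP size1 : cluster_size K (ftower tower_height) == 1%N.
  by rewrite cluster_size_ftower_eq1 tower_stableE.
rewrite /weak_cluster_magnification /magnification_factor size1 divn1.
by rewrite sub_ftower ftower_subL dvd1n.
Qed.

Lemma ftower_height_eq_base : (0 < tower_height)%N ->
  ftower tower_height = K <-> galois K (ftower tower_height.-1).
Proof.
move=> height_gt0; apply: (iff_trans (ftower_eq_base _)).
by rewrite -{1}(prednK height_gt0); apply: iff_sym (galois_ftower _).
Qed.

Lemma self_normalizing_spec :
  (cluster_size K L = 1%N <-> ntower 1 :=: H)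
  /\ (ntower 1 :=: H <-> tower_height = 0%N).
Proof.
have := cluster_size_ftower_eq1 0; rewrite ftower0 => size1E.
have := tower_stableE 0; rewrite leqn0 => height0E.
split; split.
- by move/eqP; rewrite size1E => /eqP.
- by move=> /eqP stable0; apply/eqP; rewrite size1E.
- by move=> /eqP stable0; apply/eqP; rewrite -height0E.
- by move/eqP; rewrite -height0E => /eqP.
Qed.

Lemma normalizer_eq_base_spec : L != K ->
  (galois K L <-> ntower 1 :=: G)
  /\ (ntower 1 :=: G <-> tower_height = 1%N /\ ftower 1 = K).
Proof.
move=> neqLK; split; first by have := galois_ftower 0; rewrite ftower0.
split=> [eq1G | [_ /ftower_eq_base //]].
split; last exact/ftower_eq_base.
apply: tower_height_succ => //; apply: contra neqLK => /ntower_succ_stable eq10.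
by rewrite -ftower0; apply/eqP/ftower_eq_base; rewrite -eq10.
Qed.

Lemma normalizer_normal_proper_spec :
  (ntower 1 <| G)%g /\ ntower 1 \proper G
  <-> tower_height = 2%N /\ ftower 2 = K.
Proof.
split=> [[nsNG ltNG] | [height2 /ftower_eq_base eq2G]].
  have eq2G : ntower 2 :=: G by apply/setIidPl/normal_norm.
  split; last exact/ftower_eq_base.
  apply: tower_height_succ => //; apply/negP => /ntower_succ_stable eq21.
  by move/proper_neq: ltNG; rewrite -eq2G eq21 eqxx.
have lt12 : ntower 1 \proper ntower 2.
  by rewrite ntower_properE tower_stableE height2.
split; last by rewrite -eq2G.
by rewrite /normal ntower_sub; apply/setIidPl.
Qed.

End NormalizerTower.

Section GaloisClosure.
Variables (F : fieldType) (E : splittingFieldType F) (K L : {subfield E}).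

Lemma galois_closure_sup : (L <= galois_closure K L)%VS.
Proof.
apply: subv_trans (sub_agenv _); apply: (sumv_sup 1%g) => //.
by rewrite (eq_in_limg (g := \1%VF)) ?lim1g // => b _; rewrite gal_id id_lfunE.
Qed.

Lemma galois_closure_stable (x : gal_of {:E}) : x \in 'Gal({:E} / K)%g ->
  (x @: galois_closure K L <= galois_closure K L)%VS.
Proof.
move=> galx; rewrite aimg_agen; apply: agenvS.
rewrite limg_sum; apply/subv_sumP => g galg.
apply: (sumv_sup (g * x)%g); first by rewrite groupM.
rewrite -limg_comp (eq_in_limg (g := (g * x)%g)) // => b _.
by rewrite comp_lfunE galM ?memvf.
Qed.

Hypotheses (galKE : galois K {:E}) (sKL : (K <= L)%VS).

Lemma galois_closure_galois : galois K (galois_closure K L).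
Proof.
have [_ sepKE nKE] := and3P galKE.
rewrite /galois (subv_trans sKL galois_closure_sup).
rewrite (separableSr (subvf _) sepKE).
apply/normalFieldP => a Ca.
have [r sub_rG DpK] := normalField_factors (subvf K) nKE a (memvf a).
exists (map (fun x : gal_of {:E} => x a) r); last by rewrite big_map.
apply/allP => _ /mapP[x rx ->].
apply: (subvP (galois_closure_stable (subsetP sub_rG x rx))).
exact: memv_img.
Qed.

End GaloisClosure.

Theorem theorem7p1 (F : fieldType) (E : splittingFieldType F) (K L : {subfield E}) :
  galois K {:E} -> (K <= L)%VS -> L != K ->
  let Lt := galois_closure K L in
  let G := 'Gal(Lt / K)%G in
  let H := 'Gal(Lt / L)%G in
  let NGH := 'N_G(H)%G in
  let N := fixed_subfield NGH in
  (* (1) *)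
  [/\ (K <= N)%VS, (N <= L)%VS, galois N L, \dim_N L = cluster_size K L
    & (forall M : {subfield E}, (K <= M)%VS -> (M <= L)%VS -> galois M L ->
         \dim_M L = cluster_size K L -> M = N)]
  /\ \dim_K N = cluster_s K L
  /\
  exists (k : nat) (Nc : nat -> {subfield E}) (Hs : nat -> {group gal_of Lt}),
  (* (2) *)
  [/\ cluster_chain K L k Nc,
      (forall k' Nc', cluster_chain K L k' Nc' ->
         k' = k /\ (forall i, (i <= k)%N -> Nc' i = Nc i)),
      (forall i, (0 < i <= k)%N -> \dim_K (Nc i) = cluster_s K (Nc i.-1))
    & ((0 < k)%N -> cluster_s K (Nc k.-1) = cluster_s K (Nc k))]
  /\
  [/\ normalizer_chain G H k Hs,
      (forall k' Hs', normalizer_chain G H k' Hs' ->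
         k' = k /\ (forall i, (i <= k)%N -> Hs' i :=: Hs i)),
      (forall i, (0 < i <= k)%N -> (Hs i.-1 <| Hs i)%g /\ Hs i.-1 \proper Hs i),
      (forall i, (i <= k)%N -> (Nc i = fixedField (Hs i) :> {vspace E}))
    & (forall i, (i < k)%N ->
         cluster_size K (Nc i) = #|Hs i.+1 : Hs i|%g /\
         cluster_s K (Nc i) = #|G : Hs i.+1|%g)]
  /\
  (* (3) *)
  (weak_cluster_magnification K (Nc k) L /\
   magnification_factor K (Nc k) L = cluster_size K L)
  /\
  (* (4) *)
  ((0 < k)%N -> (Nc k = K <-> galois K (Nc k.-1)))
  /\
  (* (5) *)
  ((cluster_size K L = 1%N <-> NGH :=: H) /\ (NGH :=: H <-> k = 0%N))
  /\
  (* (6) *)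
  ((galois K L <-> NGH :=: G) /\ (NGH :=: G <-> k = 1%N /\ Nc 1%N = K))
  /\
  (* (7) *)
  (((NGH <| G)%g /\ NGH \proper G) <-> [/\ k = 2%N, Nc 1%N = N & Nc 2%N = K]).
Proof.
move=> galKE sKL neqLK Lt G H NGH N.
have galKLt : galois K Lt := galois_closure_galois galKE sKL.
have sLLt : (L <= Lt)%VS := galois_closure_sup K L.
split; first exact: ftower1_characterization.
split; first exact: dim_ftower1.
exists (tower_height Lt sKL), (ftower K Lt L), (ntower K Lt L).
split; first exact: ftower_cluster_chain_spec.
split; first exact: ntower_normalizer_chain_spec.
split; first exact: ftower_height_magnification.
split; first exact: ftower_height_eq_base.
split; first exact: self_normalizing_spec.
split; first exact: normalizer_eq_base_spec.
have normal_spec := normalizer_normal_proper_spec galKLt sKL.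
by split=> [/normal_spec[-> ->] | [height2 _ ftower2]] //; apply/normal_spec.
Qed.
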